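(* Let $N\ge1$ and let $(A_N,H_N,D_N)$ be the fuzzy sphere spectral triple described in the context, with space of two-forms $\Omega^2(A_N)=\mathcal{S}/J^2$. Then $$\Omega^2(A_N)=\{X\otimes_{\mathbb{C}}\sigma_1\sigma_2+Y\otimes_{\mathbb{C}}\sigma_2\sigma_3+Z\otimes_{\mathbb{C}}\sigma_1\sigma_3:\ X,Y,Z\in A_N\},$$ in the sense that the quotient map $\mathcal{S}\to\Omega^2(A_N)$ restricts to a bijection from this subspace of $A_N\otimes_{\mathbb{C}}M_2(\mathbb{C})$ onto $\Omega^2(A_N)$.
   Context: Let $J_1,J_2,J_3$ be a basis of $su(2)$ with $[J_k,J_l]=\sum_m\epsilon_{klm}J_m$ ($\epsilon_{123}=1$). $\rho_{n/2}$ is the $(n+1)$-dimensional irreducible unitary representation of $su(2)$. $K_N=\oplus_{n=0}^N\mathbb{C}^{n+1}$, $X_k=\oplus_{n=0}^N\rho_{n/2}(J_k)$, $A_N=B(K_N)$, $H_N=K_N\otimes\mathbb{C}^2$ with $a\mapsto a\otimes1$; $\tau_k$ the Pauli matrices, $\sigma_k=\sqrt{-1}\tau_k$, $D_N=\sum_kX_k\otimes\sigma_k$; $B(H_N)=A_N\otimes M_2(\mathbb{C})$. The differential calculus of the spectral triple: $\Omega^1(A_N)=\{\sum_ja_j[D_N,b_j]\}$, $\mathcal{S}$ is the linear span of all products $a_0[D_N,a_1][D_N,a_2]$ ($a_i\in A_N$), $J^2=\{\sum_j[D_N,a_j][D_N,b_j]:\sum_ja_j[D_N,b_j]=0\}$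 (junk forms), and $\Omega^2(A_N)=\mathcal{S}/J^2$. *)

From HB Require Import structures.
From mathcomp Require Import all_boot all_order all_algebra.
From mathcomp Require Export mxtens.
Set Implicit Arguments. Unset Strict Implicit. Unset Printing Implicit Defensive.
Import Order.TTheory GRing.Theory Num.Theory.
Local Open Scope ring_scope.

Section FuzzySphere.
Variable C : numClosedFieldType.

(* Spin-s matrices (s = n/2), basis index a = 0..n, |s, m> with m = s - a.
   sx, sy, sz are Hermitian with [sx,sy] = i sz (cyclically). *)
Definition spin_coef (n i j : nat) : C :=
  sqrtC ((maxn i j)%:R * (n.+1 - maxn i j)%:R).

Definition spin_x (n : nat) : 'M[C]_(n.+1) :=
  \matrix_(i, j) (if (i.+1 == j :> nat) || (j.+1 == i :> nat)
                  then spin_coef n i j / 2%:R else 0).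

Definition spin_y (n : nat) : 'M[C]_(n.+1) :=
  \matrix_(i, j) (if i.+1 == j :> nat then - 'i * spin_coef n i j / 2%:R
                  else if j.+1 == i :> nat then 'i * spin_coef n i j / 2%:R
                  else 0).

Definition spin_z (n : nat) : 'M[C]_(n.+1) :=
  \matrix_(i, j) (if i == j then (n%:R / 2%:R) - (i : nat)%:R else 0).

(* rho_{n/2}(J_k) = - i S_k : anti-Hermitian, and
   [rho(J_k), rho(J_l)] = sum_m eps_{klm} rho(J_m). *)
Definition rho (n : nat) (k : 'I_3) : 'M[C]_(n.+1) :=
  - 'i *: (if k == 0 :> nat then spin_x n
           else if k == 1 :> nat then spin_y n else spin_z n).

Definition dimK (N : nat) : nat := \sum_(n < N.+1) (n : nat).+1.

Definition Xop (N : nat) (k : 'I_3) : 'M[C]_(dimK N) :=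
  \mxdiag_(n < N.+1) rho n k.

Definition tau (k : 'I_3) : 'M[C]_2 :=
  if k == 0 :> nat then \matrix_(i, j) (if i == j then 0 else 1)
  else if k == 1 :> nat then
    \matrix_(i, j) (if i == j then 0 else if (i : nat) == 0 then - 'i else 'i)
  else \matrix_(i, j) (if i == j then (if (i : nat) == 0 then 1 else -1) else 0).

Definition sigma (k : 'I_3) : 'M[C]_2 := 'i *: tau k.

(* B(H_N) = A_N (x) M_2(C), H_N = K_N (x) C^2 *)
Definition BH (N : nat) := 'M[C]_(dimK N * 2).

Definition Dop (N : nat) : BH N := \sum_(k < 3) (Xop N k *t sigma k).

(* the representation a |-> a (x) 1 of A_N = B(K_N) on H_N *)
Definition emb (N : nat) (a : 'M[C]_(dimK N)) : BH N := a *t (1%:M : 'M[C]_2).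

Definition commD (N : nat) (a : 'M[C]_(dimK N)) : BH N :=
  Dop N *m emb a - emb a *m Dop N.

(* S = linear span of a0 [D,a1][D,a2]  (scalars are absorbed in a0) *)
Definition in_S (N : nat) (M : BH N) : Prop :=
  exists (m : nat) (a0 a1 a2 : 'I_m -> 'M[C]_(dimK N)),
    M = \sum_(i < m) (emb (a0 i) *m commD (a1 i) *m commD (a2 i)).

Definition in_J2 (N : nat) (M : BH N) : Prop :=
  exists (m : nat) (a b : 'I_m -> 'M[C]_(dimK N)),
    \sum_(i < m) (emb (a i) *m commD (b i)) = 0 /\
    M = \sum_(i < m) (commD (a i) *m commD (b i)).

Definition in_V (N : nat) (M : BH N) : Prop :=
  exists X Y Z : 'M[C]_(dimK N),
    M = X *t (sigma 0 *m sigma 1) + Y *t (sigma 1 *m sigma 2)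
        + Z *t (sigma 0 *m sigma 2).

End FuzzySphere.

(* Write D = sum_k X_k (x) sigma_k and ad_k = [X_k, .], so that [D, a] = sum_k ad_k a (x) sigma_k.
   Every operator on H_N is uniquely P (x) 1 + sum_k Q_k (x) sigma_k, and the Pauli relations
   split [D, a][D, b] into the scalar part - sum_k ad_k a ad_k b (x) 1 and sigma-parts built
   from commutators.  If sum_i a_i [D, b_i] = 0 then sum_i a_i ad_k b_i = 0 for each k; by the
   Leibniz rule and the Jacobi identity for the su(2) relations the sigma-parts of
   sum_i [D, a_i][D, b_i] cancel, so J^2 is contained in A_N (x) 1.  Conversely, matrix units
   together with the basis vector of the trivial summand rho_0 give junk forms equal to
   c e_pq (x) 1, where c = sum_k tr X_k^2 = 3 tr X_3^2 is nonzero as soon as N >= 1; hence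
   J^2 = A_N (x) 1.  Finally [D, X_k]^2 = P (x) 1 - X_k (x) sigma_k and S is an A_N-bimodule
   containing J^2, so S contains every Q (x) sigma_k and S = B(H_N).  As sigma_1 sigma_2,
   sigma_2 sigma_3 and sigma_1 sigma_3 are -sigma_3, -sigma_1 and sigma_2, the span V is a
   complement of J^2 in S. *)

From HB Require Import structures.
From mathcomp Require Import all_boot all_order all_algebra.
From mathcomp Require Import ring zify.
Set Implicit Arguments. Unset Strict Implicit. Unset Printing Implicit Defensive.
Import GRing.Theory Num.Theory.
Local Open Scope ring_scope.

Definition mxlie (R : pzRingType) (n : nat) (A B : 'M[R]_n) : 'M[R]_n :=
  A *m B - B *m A.

Section MatrixBracket.
Variables (R : comPzRingType) (n : nat).
Implicit Types A B D : 'M[R]_n.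

Lemma mxlieC A B : mxlie A B = - mxlie B A.
Proof. by rewrite /mxlie opprB. Qed.

Lemma mxliexx A : mxlie A A = 0.
Proof. exact: subrr. Qed.

Lemma mxlieNl A B : mxlie (- A) B = - mxlie A B.
Proof. by rewrite /mxlie mulNmx mulmxN opprK opprB addrC. Qed.

Lemma mxlie0l A : mxlie 0 A = 0.
Proof. by rewrite /mxlie mul0mx mulmx0 subrr. Qed.

Lemma mxlier0 A : mxlie A 0 = 0.
Proof. by rewrite /mxlie mulmx0 mul0mx subrr. Qed.

Lemma mxlieMr A B D : mxlie A (B *m D) = mxlie A B *m D + B *m mxlie A D.
Proof. by rewrite /mxlie mulmxBl mulmxBr !mulmxA addrA subrK. Qed.

Lemma mxlie_sumr A (I : finType) (F : I -> 'M[R]_n) :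
  mxlie A (\sum_i F i) = \sum_i mxlie A (F i).
Proof. by rewrite /mxlie mulmx_sumr mulmx_suml -sumrB. Qed.

Lemma mxlie_jacobi A B D :
  mxlie A (mxlie B D) - mxlie B (mxlie A D) = mxlie (mxlie A B) D.
Proof.
rewrite /mxlie !(mulmxBl, mulmxBr) !mulmxA.
by apply/matrixP => i j; rewrite !mxE; ring.
Qed.

Lemma mxtrace_mxlie A B : \tr (mxlie A B) = 0.
Proof. by rewrite /mxlie linearB /= mxtrace_mulC subrr. Qed.

Lemma mxlie_diag_mx (e : 'rV[R]_n) A :
  mxlie (diag_mx e) A = \matrix_(i, j) ((e 0 i - e 0 j) * A i j).
Proof. by apply/matrixP => i j; rewrite /mxlie mul_diag_mx mul_mx_diag !mxE; ring. Qed.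

End MatrixBracket.

Section BlockDiagonal.
Variable R : comPzRingType.

Lemma mul_mxdiag p (p_ : 'I_p -> nat) (A B : forall i, 'M[R]_(p_ i)) :
  \mxdiag_i A i *m \mxdiag_i B i = \mxdiag_i (A i *m B i).
Proof.
rewrite {2}/mxdiag mul_mxdiag_mxblock /mxdiag; apply/eq_mxblock => i j.
by case: eqVneq => [->|]; rewrite ?conform_mx_id ?mulmx0.
Qed.

Lemma mxlie_mxdiag p (p_ : 'I_p -> nat) (A B : forall i, 'M[R]_(p_ i)) :
  mxlie (\mxdiag_i A i) (\mxdiag_i B i) = \mxdiag_i mxlie (A i) (B i).
Proof. by rewrite /mxlie !mul_mxdiag -mxdiagB. Qed.

End BlockDiagonal.

Section Tensor.
Variable R : comPzRingType.
Implicit Types (m n p q : nat).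

Lemma tensmxDl m n p q (A B : 'M[R]_(m, n)) (S : 'M[R]_(p, q)) :
  (A + B) *t S = A *t S + B *t S.
Proof. by apply/matrixP => i j; rewrite !mxE mulrDl. Qed.

Lemma tensmxNl m n p q (A : 'M[R]_(m, n)) (S : 'M[R]_(p, q)) : (- A) *t S = - (A *t S).
Proof. by apply/matrixP => i j; rewrite !mxE mulNr. Qed.

Lemma tensmxBl m n p q (A B : 'M[R]_(m, n)) (S : 'M[R]_(p, q)) :
  (A - B) *t S = A *t S - B *t S.
Proof. by rewrite tensmxDl tensmxNl. Qed.

Lemma tensmxZl m n p q c (A : 'M[R]_(m, n)) (S : 'M[R]_(p, q)) :
  (c *: A) *t S = c *: (A *t S).
Proof. by apply/matrixP => i j; rewrite !mxE mulrA. Qed.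

Lemma tensmx_suml m n p q (I : finType) (F : I -> 'M[R]_(m, n)) (S : 'M[R]_(p, q)) :
  (\sum_i F i) *t S = \sum_i F i *t S.
Proof.
apply: (big_morph (fun A => A *t S)); last exact: tens0mx.
by move=> A B; rewrite tensmxDl.
Qed.

Lemma tensmx1 m : (1%:M : 'M[R]_m) *t (1%:M : 'M[R]_2) = 1%:M.
Proof.
apply/matrixP => x y.
case: (mxtens_indexP x) => i r; case: (mxtens_indexP y) => j t.
rewrite tensmxE !mxE -natrM mulnb.
by rewrite (inj_eq (can_inj (@mxtens_indexK _ _))) xpair_eqE.
Qed.

Lemma delta_mx_sandwich n (p r t s : 'I_n) (Y : 'M[R]_n) :
  delta_mx p r *m Y *m delta_mx t s = Y r t *: delta_mx p s.
Proof.
apply/matrixP => i j; rewrite mxE (bigD1 t) //= big1 => [|l /negPf lt]; last first.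
  by rewrite [delta_mx t s l j]mxE lt mulr0.
rewrite addr0 [delta_mx t s t j]mxE eqxx /= mxE (bigD1 r) //= big1 => [|l /negPf lr]; last first.
  by rewrite [delta_mx p r i l]mxE lr andbF mul0r.
rewrite !mxE eqxx andbT addr0.
by case: (i == p); case: (j == s); rewrite ?mul1r ?mulr1 ?mul0r ?mulr0.
Qed.

End Tensor.

Lemma ord3P (k : 'I_3) : [\/ k = 0, k = 1 | k = 2].
Proof.
case: k => [[|[|[|k]]] lt_k] //.
- by constructor 1; apply: val_inj.
- by constructor 2; apply: val_inj.
- by constructor 3; apply: val_inj.
Qed.

Lemma ord2P (r : 'I_2) : r = 0 \/ r = 1.
Proof.
case: r => [[|[|r]] lt_r] //.
- by left; apply: val_inj.
- by right; apply: val_inj.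
Qed.

Lemma sum_ord3 (V : nmodType) (F : 'I_3 -> V) : \sum_(k < 3) F k = F 0 + F 1 + F 2.
Proof.
rewrite !big_ord_recl big_ord0 addr0 addrA.
by congr (F _ + F _ + F _); apply: val_inj.
Qed.

Lemma mulCii (C : numClosedFieldType) : 'i * 'i = -1 :> C.
Proof. by rewrite -expr2 sqrCi. Qed.

Section Pauli.
Variable C : numClosedFieldType.
Local Notation sigma := (sigma C).

Ltac pauli_table := apply/matrixP;
  do 2 case=> [[|[|?]] ?] //; rewrite !mxE !big_ord_recl big_ord0 !mxE /=;
  rewrite ?(mulr0, mul0r, addr0, add0r, mulr1, mul1r, mulrN, mulNr, opprK,
            mulCii, mulN1r, mulrN1, oppr0).

Lemma sigma_sqr k : sigma k *m sigma k = - 1%:M.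
Proof. by case: (ord3P k) => ->; pauli_table. Qed.

Lemma sigma01 : sigma 0 *m sigma 1 = - sigma 2. Proof. by pauli_table. Qed.
Lemma sigma10 : sigma 1 *m sigma 0 = sigma 2. Proof. by pauli_table. Qed.
Lemma sigma12 : sigma 1 *m sigma 2 = - sigma 0. Proof. by pauli_table. Qed.
Lemma sigma21 : sigma 2 *m sigma 1 = sigma 0. Proof. by pauli_table. Qed.
Lemma sigma20 : sigma 2 *m sigma 0 = - sigma 1. Proof. by pauli_table. Qed.
Lemma sigma02 : sigma 0 *m sigma 2 = sigma 1. Proof. by pauli_table. Qed.

Variable m : nat.
Implicit Types a b : 'M[C]_m.

Definition tens1 (a : 'M[C]_m) : 'M[C]_(m * 2) := a *t (1%:M : 'M[C]_2).

Lemma tens1M a b : tens1 a *m tens1 b = tens1 (a *m b).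
Proof. by rewrite /tens1 tensmx_mul mulmx1. Qed.

Lemma tens1_1 : tens1 1%:M = 1%:M.
Proof. exact: tensmx1. Qed.

Lemma tens1N a : tens1 (- a) = - tens1 a.
Proof. exact: tensmxNl. Qed.

Definition pauli (P Q0 Q1 Q2 : 'M[C]_m) : 'M[C]_(m * 2) :=
  tens1 P + Q0 *t sigma 0 + Q1 *t sigma 1 + Q2 *t sigma 2.

Lemma pauli_entry (P Q0 Q1 Q2 : 'M[C]_m) i j (r t : 'I_2) :
  pauli P Q0 Q1 Q2 (mxtens_index (i, r)) (mxtens_index (j, t)) =
  P i j * (1%:M : 'M[C]_2) r t + Q0 i j * sigma 0 r t + Q1 i j * sigma 1 r t
  + Q2 i j * sigma 2 r t.
Proof. by rewrite !mxE !mxtens_indexK. Qed.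

Lemma pauli_eq0 (P Q0 Q1 Q2 : 'M[C]_m) :
  pauli P Q0 Q1 Q2 = 0 -> [/\ P = 0, Q0 = 0, Q1 = 0 & Q2 = 0].
Proof.
move=> pauli0.
have two_neq0 : (2%:R : C) != 0 by rewrite pnatr_eq0.
have i_neq0 : ('i : C) != 0 by rewrite neq0Ci.
have entry0 i j r t : P i j * (1%:M : 'M[C]_2) r t + Q0 i j * sigma 0 r t
    + Q1 i j * sigma 1 r t + Q2 i j * sigma 2 r t = 0.
  by rewrite -pauli_entry pauli0 mxE.
suff coef0 i j : [/\ P i j = 0, Q0 i j = 0, Q1 i j = 0 & Q2 i j = 0].
  by split; apply/matrixP => i j; rewrite mxE; case: (coef0 i j).
move: (entry0 i j 0 0) (entry0 i j 1 1) (entry0 i j 0 1) (entry0 i j 1 0).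
rewrite !mxE /= !(mulr0, mul0r, addr0, add0r, mulr1, mul1r, mulrN, mulNr, mulCii, mulrN1, opprK).
move=> e00 e11 e01 e10.
have /eqP : P i j * 2%:R = (P i j + Q2 i j * 'i) + (P i j - Q2 i j * 'i) by ring.
have /eqP : Q2 i j * ('i * 2%:R) = (P i j + Q2 i j * 'i) - (P i j - Q2 i j * 'i) by ring.
have /eqP : Q0 i j * ('i * 2%:R) = (Q0 i j * 'i + Q1 i j) + (Q0 i j * 'i - Q1 i j) by ring.
have /eqP : Q1 i j * 2%:R = (Q0 i j * 'i + Q1 i j) - (Q0 i j * 'i - Q1 i j) by ring.
rewrite e00 e11 e01 e10 addr0 subr0 !mulf_eq0 (negPf two_neq0) (negPf i_neq0) !orbF.
by do 4 move/eqP->.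
Qed.

Lemma pauliP (M : 'M[C]_(m * 2)) : exists P Q0 Q1 Q2, M = pauli P Q0 Q1 Q2.
Proof.
pose B (r t : 'I_2) := \matrix_(i, j) M (mxtens_index (i, r)) (mxtens_index (j, t)).
exists (2%:R^-1 *: (B 0 0 + B 1 1)), ((2%:R * 'i)^-1 *: (B 0 1 + B 1 0)),
  (2%:R^-1 *: (B 0 1 - B 1 0)), ((2%:R * 'i)^-1 *: (B 0 0 - B 1 1)).
have two_neq0 : (2%:R : C) != 0 by rewrite pnatr_eq0.
have i_neq0 : ('i : C) != 0 by rewrite neq0Ci.
apply/matrixP => x y.
case: (mxtens_indexP x) => i r; case: (mxtens_indexP y) => j t.
rewrite pauli_entry !mxE.
case: (ord2P r) => ->; case: (ord2P t) => ->; rewrite /=;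
  rewrite ?(mulr0, mul0r, addr0, add0r, mulr1, mul1r, mulrN, mulNr, mulCii, mulrN1, opprK);
  by field; rewrite ?mulf_neq0.
Qed.

Lemma pauliB (P Q0 Q1 Q2 P' Q0' Q1' Q2' : 'M[C]_m) :
  pauli P Q0 Q1 Q2 - pauli P' Q0' Q1' Q2' = pauli (P - P') (Q0 - Q0') (Q1 - Q1') (Q2 - Q2').
Proof. by apply/matrixP => x y; rewrite !mxE; ring. Qed.

Lemma pauli_inj (P Q0 Q1 Q2 P' Q0' Q1' Q2' : 'M[C]_m) :
  pauli P Q0 Q1 Q2 = pauli P' Q0' Q1' Q2' -> [/\ P = P', Q0 = Q0', Q1 = Q1' & Q2 = Q2'].
Proof.
move/eqP; rewrite -subr_eq0 pauliB => /eqP/pauli_eq0.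
by case=> /subr0_eq-> /subr0_eq-> /subr0_eq-> /subr0_eq->.
Qed.

Lemma pauli_tens1 (P : 'M[C]_m) : pauli P 0 0 0 = tens1 P.
Proof. by rewrite /pauli !tens0mx !addr0. Qed.

Lemma sum_tens_sigma (Y : 'I_3 -> 'M[C]_m) : \sum_k Y k *t sigma k = pauli 0 (Y 0) (Y 1) (Y 2).
Proof. by rewrite sum_ord3 /pauli /tens1 tens0mx add0r. Qed.

Lemma sum_tens_sigma_mul (Y : 'I_3 -> 'I_3 -> 'M[C]_m) :
  \sum_k \sum_l Y k l *t (sigma k *m sigma l) =
  pauli (- (Y 0 0 + Y 1 1 + Y 2 2)) (Y 2 1 - Y 1 2) (Y 0 2 - Y 2 0) (Y 1 0 - Y 0 1).
Proof.
rewrite !sum_ord3 !sigma_sqr sigma01 sigma02 sigma10 sigma12 sigma20 sigma21.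
by apply/matrixP => x y; rewrite !mxE; ring.
Qed.

Lemma pauli_sigma_pairs (Y0 Y1 Y2 : 'M[C]_m) :
  Y0 *t (sigma 0 *m sigma 1) + Y1 *t (sigma 1 *m sigma 2) + Y2 *t (sigma 0 *m sigma 2)
  = pauli 0 (- Y1) Y2 (- Y0).
Proof. by rewrite sigma01 sigma12 sigma02; apply/matrixP => x y; rewrite !mxE; ring. Qed.

End Pauli.

Definition ord_cat (T : Type) m1 m2 (f1 : 'I_m1 -> T) (f2 : 'I_m2 -> T)
    (i : 'I_(m1 + m2)) : T :=
  match split i with inl j => f1 j | inr j => f2 j end.

Lemma ord_cat_lshift T m1 m2 (f1 : 'I_m1 -> T) (f2 : 'I_m2 -> T) i :
  ord_cat f1 f2 (lshift m2 i) = f1 i.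
Proof. by rewrite /ord_cat (unsplitK (inl i : 'I_m1 + 'I_m2)). Qed.

Lemma ord_cat_rshift T m1 m2 (f1 : 'I_m1 -> T) (f2 : 'I_m2 -> T) i :
  ord_cat f1 f2 (rshift m1 i) = f2 i.
Proof. by rewrite /ord_cat (unsplitK (inr i : 'I_m1 + 'I_m2)). Qed.

Lemma sum_ord_cat2 (T : Type) (V : nmodType) (G : T -> T -> V) m1 m2
    (a b : 'I_m1 -> T) (a' b' : 'I_m2 -> T) :
  \sum_(i < m1 + m2) G (ord_cat a a' i) (ord_cat b b' i) =
  \sum_(i < m1) G (a i) (b i) + \sum_(i < m2) G (a' i) (b' i).
Proof.
rewrite big_split_ord; congr (_ + _); apply: eq_bigr => i _.
  by rewrite !ord_cat_lshift.
by rewrite !ord_cat_rshift.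
Qed.

Section TwoForms.
Variables (C : numClosedFieldType) (d : nat) (X : 'I_3 -> 'M[C]_d).
Hypotheses (X01 : mxlie (X 0) (X 1) = X 2) (X12 : mxlie (X 1) (X 2) = X 0)
  (X20 : mxlie (X 2) (X 0) = X 1).
Local Notation sigma := (sigma C).
Local Notation tens1 := (@tens1 C d).
Local Notation pauli := (@pauli C d).
Local Notation ad k := (mxlie (X k)).

Definition dirac : 'M[C]_(d * 2) := \sum_(k < 3) X k *t sigma k.

Definition dD (a : 'M[C]_d) := mxlie dirac (tens1 a).

Definition laplacian (b : 'M[C]_d) := \sum_(k < 3) ad k (ad k b).

Definition inS (M : 'M[C]_(d * 2)) : Prop :=
  exists m (a0 a1 a2 : 'I_m -> 'M[C]_d),
    M = \sum_(i < m) (tens1 (a0 i) *m dD (a1 i) *m dD (a2 i)).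

Definition inJ2 (M : 'M[C]_(d * 2)) : Prop :=
  exists m (a b : 'I_m -> 'M[C]_d),
    \sum_(i < m) (tens1 (a i) *m dD (b i)) = 0 /\
    M = \sum_(i < m) (dD (a i) *m dD (b i)).

Definition inV (M : 'M[C]_(d * 2)) : Prop :=
  exists Y0 Y1 Y2 : 'M[C]_d,
    M = Y0 *t (sigma 0 *m sigma 1) + Y1 *t (sigma 1 *m sigma 2)
        + Y2 *t (sigma 0 *m sigma 2).

Lemma dDE a : dD a = \sum_k ad k a *t sigma k.
Proof.
rewrite /dD /mxlie /dirac mulmx_suml mulmx_sumr -sumrB; apply: eq_bigr => k _.
by rewrite /tens1 !tensmx_mul mulmx1 mul1mx tensmxBl.
Qed.

Lemma dDM a b : dD (a *m b) = dD a *m tens1 b + tens1 a *m dD b.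
Proof. by rewrite /dD -tens1M mxlieMr. Qed.

Lemma dDZ c a : dD (c *: a) = c *: dD a.
Proof.
by rewrite /dD /mxlie /tens1 tensmxZl -scalemxAl -scalemxAr scalerBr.
Qed.

Lemma sum_tens1_dD m (a b : 'I_m -> 'M[C]_d) :
  \sum_i tens1 (a i) *m dD (b i) = \sum_k (\sum_i a i *m ad k (b i)) *t sigma k.
Proof.
under eq_bigr do rewrite dDE mulmx_sumr.
rewrite exchange_big; apply: eq_bigr => k _; rewrite tensmx_suml.
by apply: eq_bigr => i _; rewrite /tens1 tensmx_mul mul1mx.
Qed.

Lemma tens1_dD_dD c a b :
  tens1 c *m dD a *m dD b =
  \sum_k \sum_l (c *m ad k a *m ad l b) *t (sigma k *m sigma l).
Proof.
rewrite (dDE a) mulmx_sumr mulmx_suml; apply: eq_bigr => k _.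
rewrite dDE mulmx_sumr; apply: eq_bigr => l _.
by rewrite /tens1 !tensmx_mul mul1mx.
Qed.

Lemma junk_ad m (a b : 'I_m -> 'M[C]_d) :
  \sum_i tens1 (a i) *m dD (b i) = 0 -> forall k, \sum_i a i *m ad k (b i) = 0.
Proof.
rewrite sum_tens1_dD sum_tens_sigma => /pauli_eq0[_ ad0 ad1 ad2] k.
by case: (ord3P k) => ->.
Qed.

(* The sigma-part of a junk form vanishes by the Jacobi identity. *)
Lemma junk_form m (a b : 'I_m -> 'M[C]_d) :
  \sum_i tens1 (a i) *m dD (b i) = 0 ->
  \sum_i dD (a i) *m dD (b i) = tens1 (\sum_i a i *m laplacian (b i)).
Proof.
move=> junk; have junk_k := junk_ad junk.
pose Y k l := \sum_i a i *m ad k (ad l (b i)).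
have adM k l : \sum_i ad k (a i) *m ad l (b i) = - Y k l.
  rewrite (eq_bigr (fun i => ad k (a i *m ad l (b i)) - a i *m ad k (ad l (b i)))).
    by rewrite sumrB -mxlie_sumr junk_k mxlier0 sub0r.
  by move=> i _; rewrite mxlieMr addrK.
have Ylie k l n : mxlie (X k) (X l) = X n -> Y k l - Y l k = 0.
  move=> Xkl; rewrite /Y -sumrB -[RHS](junk_k n).
  by apply: eq_bigr => i _; rewrite -mulmxBr mxlie_jacobi Xkl.
have -> : \sum_i dD (a i) *m dD (b i) =
    \sum_k \sum_l (- Y k l) *t (sigma k *m sigma l).
  under eq_bigr do rewrite -[dD (a _)]mul1mx -tensmx1 tens1_dD_dD.
  rewrite exchange_big; apply: eq_bigr => k _; rewrite exchange_big.
  apply: eq_bigr => l _; rewrite -adM tensmx_suml.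
  by apply: eq_bigr => i _; rewrite mul1mx.
rewrite sum_tens_sigma_mul -pauli_tens1; congr pauli.
- rewrite -!opprD opprK /laplacian; under [RHS]eq_bigr do rewrite mulmx_sumr.
  by rewrite exchange_big sum_ord3.
- by rewrite opprK addrC (Ylie _ _ _ X12).
- by rewrite opprK addrC (Ylie _ _ _ X20).
- by rewrite opprK addrC (Ylie _ _ _ X01).
Qed.

Lemma inS_gen c a b : inS (tens1 c *m dD a *m dD b).
Proof. by exists 1%N, (fun=> c), (fun=> a), (fun=> b); rewrite big_ord1. Qed.

Lemma inS_add M1 M2 : inS M1 -> inS M2 -> inS (M1 + M2).
Proof.
move=> [m1 [a0 [a1 [a2 ->]]]] [m2 [b0 [b1 [b2 ->]]]].
exists (m1 + m2)%N, (ord_cat a0 b0), (ord_cat a1 b1), (ord_cat a2 b2).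
rewrite big_split_ord; congr (_ + _); apply: eq_bigr => i _.
  by rewrite !ord_cat_lshift.
by rewrite !ord_cat_rshift.
Qed.

Lemma inS_sum (I : finType) (F : I -> 'M[C]_(d * 2)) :
  (forall i, inS (F i)) -> inS (\sum_i F i).
Proof.
move=> inS_F; apply: big_ind => //; last exact: inS_add.
by exists 0%N, (fun=> 0), (fun=> 0), (fun=> 0); rewrite big_ord0.
Qed.

Lemma inS_mull c M : inS M -> inS (tens1 c *m M).
Proof.
move=> [m [a0 [a1 [a2 ->]]]]; exists m, (fun i => c *m a0 i), a1, a2.
by rewrite mulmx_sumr; apply: eq_bigr => i _; rewrite !mulmxA tens1M.
Qed.

Lemma inS_mulr M c : inS M -> inS (M *m tens1 c).
Proof.
move=> [m [a0 [a1 [a2 ->]]]]; rewrite mulmx_suml; apply: inS_sum => i.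
have -> : tens1 (a0 i) *m dD (a1 i) *m dD (a2 i) *m tens1 c =
    tens1 (a0 i) *m dD (a1 i) *m dD (a2 i *m c)
    + tens1 (- a0 i) *m dD (a1 i *m a2 i) *m dD c
    + tens1 (a0 i *m a1 i) *m dD (a2 i) *m dD c.
  rewrite !dDM; move: (dD (a1 i)) (dD (a2 i)) (dD c) => D1 D2 Dc.
  rewrite !(mulmxDr, mulmxDl) tens1N !mulNmx !mulmxA !tens1M.
  by rewrite addrA addrK subrK.
by do 2 ?apply: inS_add; apply: inS_gen.
Qed.

Lemma inJ2_inS M : inJ2 M -> inS M.
Proof.
move=> [m [a [b [_ ->]]]]; exists m, (fun=> 1%:M), a, b.
by apply: eq_bigr => i _; rewrite tens1_1 mul1mx.
Qed.

Lemma inJ2_add M1 M2 : inJ2 M1 -> inJ2 M2 -> inJ2 (M1 + M2).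
Proof.
move=> [m1 [a [b [junk_ab ->]]]] [m2 [a' [b' [junk_ab' ->]]]].
exists (m1 + m2)%N, (ord_cat a a'), (ord_cat b b'); split.
  by rewrite (sum_ord_cat2 (fun x y => tens1 x *m dD y)) junk_ab junk_ab' addr0.
by rewrite (sum_ord_cat2 (fun x y => dD x *m dD y)).
Qed.

Lemma inJ2_sum (I : finType) (F : I -> 'M[C]_(d * 2)) :
  (forall i, inJ2 (F i)) -> inJ2 (\sum_i F i).
Proof.
move=> inJ2_F; apply: big_ind => //; last exact: inJ2_add.
by exists 0%N, (fun=> 0), (fun=> 0); rewrite !big_ord0.
Qed.

Lemma inJ2Z c M : inJ2 M -> inJ2 (c *: M).
Proof.
move=> [m [a [b [junk_ab ->]]]]; exists m, a, (fun i => c *: b i).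
rewrite scaler_sumr; split.
  under eq_bigr do rewrite dDZ -scalemxAr.
  by rewrite -scaler_sumr junk_ab scaler0.
by apply: eq_bigr => i _; rewrite dDZ scalemxAr.
Qed.

Lemma mxtrace_sqr_X k : \tr (X k *m X k) = \tr (X 2 *m X 2).
Proof.
have tr_lie (A B D : 'M[C]_d) : mxlie A B = D ->
    \tr (D *m D) = \tr (A *m B *m D) - \tr (B *m A *m D).
  by move=> AB; rewrite -{1}AB /mxlie mulmxBl linearB.
have rot (A B D : 'M[C]_d) : \tr (A *m B *m D) = \tr (D *m A *m B).
  by rewrite mxtrace_mulC mulmxA.
suff trXX k' : \tr (X k' *m X k') = \tr (X 0 *m X 1 *m X 2) - \tr (X 2 *m X 1 *m X 0).
  by rewrite !trXX.
case: (ord3P k') => ->.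
- by rewrite (tr_lie _ _ _ X12) (rot (X 1)).
- by rewrite (tr_lie _ _ _ X20) (rot (X 2)) (rot (X 1)) (rot (X 0) (X 2)) (rot (X 1) (X 0)).
- by rewrite (tr_lie _ _ _ X01) (rot (X 1)).
Qed.

Lemma dD_sqr a : dD a *m dD a =
  pauli (- \sum_k ad k a *m ad k a) (- mxlie (ad 1 a) (ad 2 a))
        (- mxlie (ad 2 a) (ad 0 a)) (- mxlie (ad 0 a) (ad 1 a)).
Proof.
rewrite -[dD a *m _]mul1mx -tens1_1 mulmxA tens1_dD_dD sum_tens_sigma_mul sum_ord3.
by rewrite /mxlie !mul1mx !opprB.
Qed.

Lemma dD_sqr_X k : exists P, dD (X k) *m dD (X k) + X k *t sigma k = tens1 P.
Proof.
have adX l n : mxlie (X k) (X l) = X n -> ad l (X k) = - X n.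
  by move=> <-; rewrite mxlieC.
case: (ord3P k) => -> in adX *; eexists; rewrite dD_sqr /pauli.
- rewrite mxliexx (adX _ _ X01) X20 mxlieNl mxlier0 mxlie0l (mxlieC (X 2)) X12.
  by rewrite !oppr0 !opprK !tens0mx !addr0 tensmxNl subrK.
- rewrite mxliexx X01 (adX _ _ X12) mxlieNl mxlier0 mxlie0l (mxlieC (X 0)) X20.
  by rewrite !oppr0 !opprK !tens0mx !addr0 tensmxNl subrK.
- rewrite mxliexx X12 (adX _ _ X20) mxlieNl mxlier0 mxlie0l (mxlieC (X 1)) X01.
  by rewrite !oppr0 !opprK !tens0mx !addr0 tensmxNl subrK.
Qed.

Lemma inV_inj M1 M2 : inV M1 -> inV M2 -> inJ2 (M1 - M2) -> M1 = M2.
Proof.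
move=> [Y0 [Y1 [Y2 ->]]] [Y0' [Y1' [Y2' ->]]] [m [a [b [junk_ab]]]].
rewrite junk_form // !pauli_sigma_pairs pauliB -pauli_tens1 => /pauli_inj[_].
by move=> /subr0_eq/oppr_inj-> /subr0_eq-> /subr0_eq/oppr_inj->.
Qed.

Lemma mxtrace_X k : \tr (X k) = 0.
Proof. by case: (ord3P k) => ->; rewrite -?X12 -?X20 -?X01 mxtrace_mxlie. Qed.

Section TrivialSummand.
Variable i0 : 'I_d.
Hypothesis X_row0 : forall k j, X k i0 j = 0.

(* Matrix units e_pr, e_rq, corrected through the trivial index i0 so that the identity
   contributes tr 1 - d = 0, while X_k contributes tr X_k - d (X_k)_{i0 i0} = 0. *)
Definition junk_left (p : 'I_d) : 'I_(d + 1) -> 'M[C]_d :=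
  ord_cat (fun r => delta_mx p r) (fun=> - d%:R *: delta_mx p i0).

Definition junk_right (q : 'I_d) : 'I_(d + 1) -> 'M[C]_d :=
  ord_cat (fun r => delta_mx r q) (fun=> delta_mx i0 q).

Lemma junk_sandwich p q (Y W : 'M[C]_d) :
  \sum_i junk_left p i *m (Y *m junk_right q i *m W) =
  (\tr Y - d%:R * Y i0 i0) *: (delta_mx p q *m W).
Proof.
rewrite big_split_ord big_ord1 /junk_left /junk_right ord_cat_rshift ord_cat_rshift.
under eq_bigr do rewrite ord_cat_lshift ord_cat_lshift !mulmxA delta_mx_sandwich -scalemxAl.
rewrite -scaler_suml -scalemxAl !mulmxA delta_mx_sandwich -scalemxAl scalerA.
by rewrite /= -scalerDl mulNr.
Qed.

Lemma junk_cond p q : \sum_i tens1 (junk_left p i) *m dD (junk_right q i) = 0.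
Proof.
rewrite sum_tens1_dD big1 // => k _.
have ad_sandwich b : ad k b = X k *m b *m 1%:M - 1%:M *m b *m X k.
  by rewrite mulmx1 mul1mx.
under eq_bigr do rewrite ad_sandwich mulmxBr.
rewrite sumrB !junk_sandwich mxtrace_X X_row0 mxtrace1 mxE eqxx.
by rewrite mulr0 subr0 scale0r mulr1 subrr scale0r subrr tens0mx.
Qed.

Lemma ad_adE k b : ad k (ad k b) =
  (X k *m X k) *m b *m 1%:M - X k *m b *m X k - X k *m b *m X k
  + 1%:M *m b *m (X k *m X k).
Proof. by rewrite /mxlie mulmx1 mul1mx !mulmxBl !mulmxBr !mulmxA opprB addrA addrAC. Qed.

Lemma junk_laplacian p q :
  \sum_i junk_left p i *m laplacian (junk_right q i) =
  (\sum_k \tr (X k *m X k)) *: delta_mx p q.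
Proof.
rewrite scaler_suml; under eq_bigr do rewrite mulmx_sumr.
rewrite exchange_big; apply: eq_bigr => k _.
have XX00 : (X k *m X k) i0 i0 = 0.
  by rewrite mxE big1 // => j _; rewrite X_row0 mul0r.
under eq_bigr do rewrite ad_adE !mulmxDr !mulmxN.
rewrite !(big_split, sumrN) /= !junk_sandwich mxtrace_X X_row0 XX00 mxtrace1 mxE eqxx.
by rewrite mulr0 !subr0 mulr1 subrr !scale0r !subr0 addr0 mulmx1.
Qed.

Hypothesis trX2 : \tr (X 2 *m X 2) != 0.

Lemma casimir_neq0 : \sum_k \tr (X k *m X k) != 0.
Proof.
under eq_bigr do rewrite mxtrace_sqr_X.
by rewrite sumr_const card_ord mulrn_eq0 negb_or trX2.
Qed.

Lemma inJ2_tens1 P : inJ2 (tens1 P).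
Proof.
pose c := \sum_k \tr (X k *m X k); have c_neq0 : c != 0 := casimir_neq0.
rewrite (matrix_sum_delta P) /tens1 tensmx_suml; apply: inJ2_sum => p.
rewrite tensmx_suml; apply: inJ2_sum => q.
rewrite -[P p q](divfK c_neq0) -scalerA tensmxZl; apply: inJ2Z.
exists (d + 1)%N, (junk_left p), (junk_right q); split; first exact: junk_cond.
by rewrite junk_form ?junk_cond // junk_laplacian.
Qed.

Lemma inS_tens_sigma_X k : inS (X k *t sigma k).
Proof.
have [P sqrP] := dD_sqr_X k.
have -> : X k *t sigma k = tens1 P + tens1 (- 1%:M) *m dD (X k) *m dD (X k).
  by rewrite -sqrP tens1N tens1_1 !mulNmx mul1mx addrAC subrr add0r.
by apply: inS_add; [exact: inJ2_inS (inJ2_tens1 P) | exact: inS_gen].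
Qed.

Lemma X_neq0 k : X k != 0.
Proof. by apply: contra_neq trX2 => Xk0; rewrite -(mxtrace_sqr_X k) Xk0 mulmx0 mxtrace0. Qed.

(* Sandwich X_k (x) sigma_k between matrix units, dividing by a nonzero entry of X_k. *)
Lemma inS_tens_sigma k Q : inS (Q *t sigma k).
Proof.
have /existsP[[u v] /= Xuv] : [exists uv : 'I_d * 'I_d, X k uv.1 uv.2 != 0].
  apply: contraNT (X_neq0 k) => /existsPn Xk0.
  by apply/eqP/matrixP => i j; rewrite mxE; apply/eqP/negbNE/(Xk0 (i, j)).
rewrite (matrix_sum_delta Q) tensmx_suml; apply: inS_sum => p.
rewrite tensmx_suml; apply: inS_sum => q.
have -> : (Q p q *: delta_mx p q) *t sigma k =
    tens1 ((Q p q / X k u v) *: delta_mx p u) *m (X k *t sigma k) *m tens1 (delta_mx v q).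
  rewrite /tens1 !tensmx_mul mul1mx mulmx1 -!scalemxAl delta_mx_sandwich scalerA.
  by rewrite divfK // tensmxZl.
exact/inS_mulr/inS_mull/inS_tens_sigma_X.
Qed.

Lemma inV_inS M : inV M -> inS M.
Proof.
move=> [Y0 [Y1 [Y2 ->]]]; rewrite pauli_sigma_pairs /pauli /tens1 tens0mx add0r.
by do 2 ?apply: inS_add; apply: inS_tens_sigma.
Qed.

Lemma two_form_decomp M : exists V J, [/\ inV V, inJ2 J & M = V + J].
Proof.
have [P [Q0 [Q1 [Q2 ->]]]] := pauliP M.
exists (pauli 0 Q0 Q1 Q2), (tens1 P); split; last 2 first.
- exact: inJ2_tens1.
- by apply/matrixP => x y; rewrite !mxE; ring.
by exists (- Q2), (- Q0), Q1; rewrite pauli_sigma_pairs !opprK.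
Qed.
End TrivialSummand.
End TwoForms.

Section SpinLadder.
Variable C : numClosedFieldType.

Definition ladder_coef (n k : nat) : C := sqrtC (k%:R * (n.+1 - k)%:R).

Lemma ladder_coef_sqr n k : ladder_coef n k ^+ 2 = k%:R * (n.+1 - k)%:R.
Proof. exact: sqrtCK. Qed.

Lemma ladder_coef0 n : ladder_coef n 0 = 0.
Proof. by rewrite /ladder_coef mul0r sqrtC0. Qed.

Lemma ladder_coef_top n : ladder_coef n n.+1 = 0.
Proof. by rewrite /ladder_coef subnn mulr0 sqrtC0. Qed.

Definition spin_raise n : 'M[C]_n.+1 :=
  \matrix_(i, j) (if i.+1 == j :> nat then ladder_coef n j else 0).

Definition spin_lower n : 'M[C]_n.+1 :=
  \matrix_(i, j) (if j.+1 == i :> nat then ladder_coef n i else 0).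

Lemma spin_zE n : spin_z C n = diag_mx (\row_(i < n.+1) (n%:R / 2%:R - i%:R)).
Proof.
apply/matrixP => i j; rewrite !mxE eq_sym.
by case: eqP; rewrite ?mulr1n ?mulr0n.
Qed.

Lemma spin_z_raise n : mxlie (spin_z C n) (spin_raise n) = spin_raise n.
Proof.
rewrite spin_zE mxlie_diag_mx; apply/matrixP => i j; rewrite !mxE.
by case: eqP => [<-|_]; rewrite ?mulr0 // -addn1 natrD; ring.
Qed.

Lemma spin_z_lower n : mxlie (spin_z C n) (spin_lower n) = - spin_lower n.
Proof.
rewrite spin_zE mxlie_diag_mx; apply/matrixP => i j; rewrite !mxE.
by case: eqP => [<-|_]; rewrite ?mulr0 ?oppr0 // -addn1 natrD; ring.
Qed.

Lemma spin_raise_lowerE n :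
  spin_raise n *m spin_lower n = diag_mx (\row_(i < n.+1) ladder_coef n i.+1 ^+ 2).
Proof.
apply/matrixP => i j; rewrite !mxE.
rewrite (eq_bigr (fun l : 'I_n.+1 =>
    if (l : nat) == i.+1 then ladder_coef n l ^+ 2 *+ (i == j) else 0)); last first.
  move=> l _; rewrite !mxE [i.+1 == _]eq_sym.
  case: eqP => [->|_]; last by rewrite mul0r.
  by rewrite eqSS (inj_eq val_inj) eq_sym; case: eqP; rewrite ?mulr0 // expr2.
rewrite -big_mkcond (big_ord1_eq _ (fun k => ladder_coef n k ^+ 2 *+ (i == j))).
case: ltnP => // i_top.
have -> : (i : nat) = n by apply/eqP; rewrite eqn_leq -ltnS ltn_ord.
by rewrite ladder_coef_top expr0n mul0rn.
Qed.

Lemma spin_lower_raiseE n :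
  spin_lower n *m spin_raise n = diag_mx (\row_(i < n.+1) ladder_coef n i ^+ 2).
Proof.
apply/matrixP => i j; rewrite !mxE.
case: i => [[|i] lt_i] /=.
  by rewrite big1 ?ladder_coef0 ?expr0n ?mul0rn // => l _; rewrite !mxE mul0r.
rewrite (eq_bigr (fun l : 'I_n.+1 =>
    if (l : nat) == i then ladder_coef n i.+1 ^+ 2 *+ (i.+1 == j :> nat) else 0)).
  rewrite -big_mkcond (big_ord1_eq _ (fun=> ladder_coef n i.+1 ^+ 2 *+ (i.+1 == j :> nat))).
  by rewrite (ltnW lt_i) -val_eqE.
move=> l _; rewrite !mxE eqSS.
case: eqP => [->|_]; last by rewrite mul0r.
by case: eqP => [<-|_]; rewrite ?mulr0 // expr2.
Qed.

Lemma spin_raise_lower n : mxlie (spin_raise n) (spin_lower n) = 2%:R *: spin_z C n.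
Proof.
rewrite /mxlie spin_raise_lowerE spin_lower_raiseE spin_zE.
apply/matrixP => i j; rewrite !mxE; case: eqP => _; last by rewrite !mulr0n subrr mulr0.
have le_in : (i <= n)%N by rewrite -ltnS.
by rewrite !mulr1n !ladder_coef_sqr subSS !natrB ?(leq_trans le_in) // -addn1 natrD; field.
Qed.

Lemma su2_of_ladder m (P M Z : 'M[C]_m) :
    mxlie Z P = P -> mxlie Z M = - M -> mxlie P M = 2%:R *: Z ->
  let J0 := (- 'i / 2%:R) *: (P + M) in
  let J1 := 2%:R^-1 *: (M - P) in
  let J2 := - 'i *: Z in
  [/\ mxlie J0 J1 = J2, mxlie J1 J2 = J0 & mxlie J2 J0 = J1].
Proof.
move=> ZP ZM PM J0 J1 J2.
have eZP : Z *m P = P + P *m Z by apply/eqP; rewrite -subr_eq; exact/eqP.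
have eZM : Z *m M = - M + M *m Z by apply/eqP; rewrite -subr_eq; exact/eqP.
have ePM : P *m M = 2%:R *: Z + M *m P by apply/eqP; rewrite -subr_eq; exact/eqP.
have sqr_half_i : (- 'i) * (- 'i / 2%:R) = - 2%:R^-1 :> C.
  by rewrite mulrA mulrNN mulCii mulN1r.
have sqr_half_i' : (- 'i / 2%:R) * (- 'i) = - 2%:R^-1 :> C by rewrite mulrC sqr_half_i.
rewrite /J0 /J1 /J2 /mxlie -!scalemxAl -!scalemxAr.
rewrite !(mulmxDl, mulmxDr, mulmxBl, mulmxBr, mulmxN, mulNmx) eZP eZM ePM !scalerA
  sqr_half_i sqr_half_i'.
by split; apply/matrixP => i j; rewrite !mxE; field.
Qed.

Lemma spin_xE n : spin_x C n = 2%:R^-1 *: (spin_raise n + spin_lower n).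
Proof.
apply/matrixP => i j; rewrite !mxE /spin_coef.
case: (eqVneq (i : nat).+1 j) => [<-|_] /=.
  have -> : (i.+2 == i) = false by apply/negbTE; lia.
  by rewrite (maxn_idPr (leqnSn _)) addr0 mulrC.
case: (eqVneq (j : nat).+1 i) => [<-|_] /=; last by rewrite add0r mulr0.
by rewrite (maxn_idPl (leqnSn _)) add0r mulrC.
Qed.

Lemma spin_yE n :
  spin_y C n = (- 'i / 2%:R) *: spin_raise n + ('i / 2%:R) *: spin_lower n.
Proof.
apply/matrixP => i j; rewrite !mxE /spin_coef.
case: (eqVneq (i : nat).+1 j) => [<-|_] /=.
  have -> : (i.+2 == i) = false by apply/negbTE; lia.
  rewrite (maxn_idPr (leqnSn _)) mulr0 addr0 /ladder_coef; ring.
case: (eqVneq (j : nat).+1 i) => [<-|_] /=; last by rewrite !mulr0 add0r.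
rewrite (maxn_idPl (leqnSn _)) mulr0 add0r /ladder_coef; ring.
Qed.

Lemma rho_su2 n :
  [/\ mxlie (rho C n 0) (rho C n 1) = rho C n 2,
       mxlie (rho C n 1) (rho C n 2) = rho C n 0
     & mxlie (rho C n 2) (rho C n 0) = rho C n 1].
Proof.
have -> : rho C n 0 = (- 'i / 2%:R) *: (spin_raise n + spin_lower n).
  by rewrite /rho /= spin_xE scalerA.
have -> : rho C n 1 = 2%:R^-1 *: (spin_lower n - spin_raise n).
  rewrite /rho /= spin_yE scalerDr !scalerA addrC scalerBr -scaleNr.
  by congr (_ *: _ + _ *: _); rewrite mulrA ?mulrN ?mulNr mulCii; ring.
exact: su2_of_ladder (spin_z_raise n) (spin_z_lower n) (spin_raise_lower n).
Qed.
End SpinLadder.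

Section FuzzySphereOperators.
Variables (C : numClosedFieldType) (N : nat).

Lemma Xop_su2 :
  [/\ mxlie (Xop C N 0) (Xop C N 1) = Xop C N 2,
       mxlie (Xop C N 1) (Xop C N 2) = Xop C N 0
     & mxlie (Xop C N 2) (Xop C N 0) = Xop C N 1].
Proof.
by rewrite /Xop !mxlie_mxdiag; split; apply: eq_mxdiag => n; case: (rho_su2 C n).
Qed.

Lemma dimK_gt0 : (0 < dimK N)%N.
Proof. by rewrite /dimK big_ord_recl. Qed.

Definition trivial_index : 'I_(dimK N) := Ordinal dimK_gt0.

(* [trivial_index] is the basis vector of the summand rho_0 = 0 of K_N. *)
Lemma Xop_row0 k j : Xop C N k trivial_index j = 0.
Proof.
have rho_00 : rho C 0 k = 0.
  apply/matrixP => i i'; rewrite (ord1 i) (ord1 i') !mxE /rho.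
  by case: ifP => _; [|case: ifP => _]; rewrite !mxE /= ?mulr0 ?mul0r ?subr0 ?mulr0.
rewrite /Xop mxdiag_recl castmxE.
have -> : cast_ord (esym mxsize_recl) trivial_index = lshift _ (ord0 : 'I_1).
  exact: val_inj.
case: (splitP (cast_ord (esym mxsize_recl) j)) => j' j_eq.
  have -> : cast_ord (esym mxsize_recl) j = lshift _ j' by exact: val_inj.
  by rewrite block_mxEul rho_00 mxE.
have -> : cast_ord (esym mxsize_recl) j = rshift _ j' by exact: val_inj.
by rewrite block_mxEur mxE.
Qed.

Lemma mxtrace_Xop2_sqr :
  \tr (Xop C N 2 *m Xop C N 2) =
  - \sum_(n < N.+1) \sum_(a < n.+1) ((n : nat)%:R / 2%:R - (a : nat)%:R) ^+ 2.
Proof.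
rewrite /Xop mul_mxdiag mxtrace_mxdiag -sumrN; apply: eq_bigr => n _.
rewrite /rho /= -scalemxAl -scalemxAr scalerA mxtraceZ mulrNN mulCii mulN1r.
rewrite spin_zE mul_diag_mx; congr (- _); apply: eq_bigr => a _.
by rewrite !mxE eqxx mulr1n expr2.
Qed.

Lemma mxtrace_Xop2_sqr_neq0 : (1 <= N)%N -> \tr (Xop C N 2 *m Xop C N 2) != 0.
Proof.
move=> N_gt0; rewrite mxtrace_Xop2_sqr oppr_eq0; apply/eqP => sum0.
have sqr_ge0 (n a : nat) : 0 <= (n%:R / 2%:R - a%:R) ^+ 2 :> C.
  by apply: real_exprn_even_ge0; rewrite // rpredB ?rpredM ?rpredV ?realn.
have sum_ge0 (n : 'I_N.+1) : 0 <= \sum_(a < n.+1) (n%:R / 2%:R - a%:R) ^+ 2 :> C.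
  exact: sumr_ge0.
have sum1_0 := psumr_eq0P (fun n _ => sum_ge0 n) sum0 (i := Ordinal (N_gt0 : (1 < N.+1)%N)) isT.
have /eqP := psumr_eq0P (fun (a : 'I_2) _ => sqr_ge0 1%N a) sum1_0 (i := ord0) isT.
by rewrite subr0 sqrf_eq0 mul1r invr_eq0 pnatr_eq0.
Qed.
End FuzzySphereOperators.

Theorem corollary8p4 (C : numClosedFieldType) (N : nat) (hN : (1 <= N)%N) :
  (forall M : BH C N, in_V M -> in_S M) /\
  (forall M1 M2 : BH C N, in_V M1 -> in_V M2 -> in_J2 (M1 - M2) -> M1 = M2) /\
  (forall M : BH C N, in_S M -> exists V J : BH C N, [/\ in_V V, in_J2 J & M = V + J]).
Proof.
have [X01 X12 X20] := Xop_su2 C N.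
have trX2 := mxtrace_Xop2_sqr_neq0 C hN.
split; first exact: (inV_inS X01 X12 X20 (@Xop_row0 C N) trX2).
split; first exact: (inV_inj X01 X12 X20).
by move=> M _; exact: (two_form_decomp X01 X12 X20 (@Xop_row0 C N) trX2).
Qed.
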